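(* Let $\phi:Z\to[-\infty,+\infty]$ be proper and closed, and suppose Assumptions (A1) and (A2) hold for some $\lambda\in\mathbb R$. Let $\tau\in(0,1/\lambda^-)$ and $(x',y')\in D\phi$. Then $\phi^Y_\tau(x;y')>-\infty$ for every $x\in X$, and $\phi^X_\tau(y;x')<+\infty$ for every $y\in Y$.
   Context: $(X,\mathsf d_X)$, $(Y,\mathsf d_Y)$ complete metric spaces; $Z=X\times Y$. $D_X\phi=\{x:\phi(x,y)<+\infty\ \forall y\}$, $D_Y\phi=\{y:\phi(x,y)>-\infty\ \forall x\}$, $D\phi=D_X\phi\times D_Y\phi$; proper: $D\phi\ne\emptyset$; closed: for $x\in D_X\phi$, $y\mapsto\phi(x,y)$ upper semicontinuous, for $y\in D_Y\phi$, $x\mapsto\phi(x,y)$ lower semicontinuous. (A1): $\phi=+\infty$ on $(X\setminus D_X\phi)\times D_Y\phi$, $\phi=-\infty$ on $D_X\phi\times(Y\setminus D_Y\phi)$. $\lambda^-=\max\{-\lambda,0\}$, $1/\lambda^-:=+\infty$ if $\lambda^-=0$. $\Phi_\tau(x,y;x',y')=\phi(x',y')+\frac1{2\tau}(\mathsf d_X^2(x',x)-\mathsf d_Y^2(y',y))$. $f$ on $Z$ is $\mu$-convex-concave along curves $\gamma,\sigma$ if for all $t\in[0,1]$: $f(\gamma_t,y)\le(1-t)f(\gamma_0,y)+tf(\gamma_1,y)-\frac\mu2t(1-t)\mathsf d_X^2(\gamma_0,\gamma_1)$ for all $y$, and $f(x,\sigma_t)\ge(1-t)f(x,\sigma_0)+tf(x,\sigma_1)+\frac\mu2t(1-t)\mathsf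 d_Y^2(\sigma_0,\sigma_1)$ for all $x$. (A2) for $\lambda$: for every $(x,y)\in Z$, $(x_0,y_0),(x_1,y_1)\in D\phi$ there are continuous curves $\gamma$ from $x_0$ to $x_1$, $\sigma$ from $y_0$ to $y_1$ such that for all $\tau\in(0,1/\lambda^-)$, $(x',y')\mapsto\Phi_\tau(x,y;x',y')$ is $(\tau^{-1}+\lambda)$-convex-concave along them. $\phi^X_\tau(y;x')=\sup_{y'\in Y}\{\phi(x',y')-\frac1{2\tau}\mathsf d_Y^2(y',y)\}$, $\phi^Y_\tau(x;y')=\inf_{x''\in X}\{\phi(x'',y')+\frac1{2\tau}\mathsf d_X^2(x'',x)\}$. *)

From HB Require Import structures.
From mathcomp Require Import all_boot all_order all_algebra.
From mathcomp Require Import all_classical all_reals all_analysis.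
Set Implicit Arguments. Unset Strict Implicit. Unset Printing Implicit Defensive.
Import Order.TTheory GRing.Theory Num.Theory.
Local Open Scope classical_set_scope.
Local Open Scope ring_scope.

Section Defs.
Variable R : realType.

Definition is_metric (T : Type) (d : T -> T -> R) : Prop :=
  [/\ (forall x y, 0 <= d x y),
      (forall x y, d x y = 0 <-> x = y),
      (forall x y, d x y = d y x) &
      (forall x y z, d x z <= d x y + d y z)].

Definition complete_metric (T : Type) (d : T -> T -> R) : Prop :=
  forall u : nat -> T,
    (forall e, 0 < e -> exists N, forall m n, (N <= m)%N -> (N <= n)%N ->
        d (u m) (u n) < e) ->
    exists l, forall e, 0 < e -> exists N, forall n, (N <= n)%N -> d (u n) l < e.

Definition lsc (T : Type) (d : T -> T -> R) (f : T -> \bar R) : Prop :=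
  forall x (a : R), (a%:E < f x)%E ->
    exists del, 0 < del /\ forall z, d z x < del -> (a%:E < f z)%E.
Definition usc (T : Type) (d : T -> T -> R) (f : T -> \bar R) : Prop :=
  forall x (a : R), (f x < a%:E)%E ->
    exists del, 0 < del /\ forall z, d z x < del -> (f z < a%:E)%E.

Definition curve_continuous (T : Type) (d : T -> T -> R) (g : R -> T) : Prop :=
  forall t, 0 <= t <= 1 -> forall e, 0 < e -> exists del, 0 < del /\
    forall s, 0 <= s <= 1 -> `|s - t| < del -> d (g s) (g t) < e.

Variables (X Y : Type) (dX : X -> X -> R) (dY : Y -> Y -> R).
Variable phi : X * Y -> \bar R.

Definition DX : set X := [set x | forall y, (phi (x, y) < +oo)%E].
Definition DY : set Y := [set y | forall x, (-oo < phi (x, y))%E].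

Definition proper_fun : Prop := exists x y, DX x /\ DY y.

Definition closed_fun : Prop :=
  (forall x, DX x -> usc dY (fun y => phi (x, y))) /\
  (forall y, DY y -> lsc dX (fun x => phi (x, y))).

Definition A1 : Prop :=
  (forall x y, ~ DX x -> DY y -> phi (x, y) = +oo%E) /\
  (forall x y, DX x -> ~ DY y -> phi (x, y) = -oo%E).

Definition negpart (l : R) : R := Num.max (- l) 0.
Definition inv_negpart (l : R) : \bar R :=
  if negpart l == 0 then +oo%E else (1 / negpart l)%:E.
Definition tau_adm (l tau : R) : Prop := 0 < tau /\ (tau%:E < inv_negpart l)%E.

Definition Phi (tau : R) (x : X) (y : Y) (x' : X) (y' : Y) : \bar R :=
  (phi (x', y') + ((dX x' x ^+ 2 - dY y' y ^+ 2) / (2 * tau))%:E)%E.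

Definition convex_concave_along (f : X * Y -> \bar R) (mu : R)
    (g : R -> X) (s : R -> Y) : Prop :=
  forall t, 0 <= t <= 1 ->
    (forall y, (f (g t, y) <= (1 - t)%:E * f (g 0%R, y) + t%:E * f (g 1%R, y)
                 - (mu / 2 * t * (1 - t) * dX (g 0%R) (g 1%R) ^+ 2)%:E)%E) /\
    (forall x, ((1 - t)%:E * f (x, s 0%R) + t%:E * f (x, s 1%R)
                 + (mu / 2 * t * (1 - t) * dY (s 0%R) (s 1%R) ^+ 2)%:E
                 <= f (x, s t))%E).

Definition A2 (l : R) : Prop :=
  forall (x : X) (y : Y) x0 y0 x1 y1,
    DX x0 -> DY y0 -> DX x1 -> DY y1 ->
    exists (g : R -> X) (s : R -> Y),
      curve_continuous dX g /\ g 0%R = x0 /\ g 1%R = x1 /\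
      curve_continuous dY s /\ s 0%R = y0 /\ s 1%R = y1 /\
          (forall tau, tau_adm l tau ->
            convex_concave_along (fun p => Phi tau x y p.1 p.2) (tau^-1 + l) g s).

Definition phiX (tau : R) (y : Y) (x' : X) : \bar R :=
  ereal_sup [set (phi (x', y') - (dY y' y ^+ 2 / (2 * tau))%:E)%E | y' in [set: Y]].
Definition phiY (tau : R) (x : X) (y' : Y) : \bar R :=
  ereal_inf [set (phi (x'', y') + (dX x'' x ^+ 2 / (2 * tau))%:E)%E | x'' in [set: X]].

End Defs.

From HB Require Import structures.
From mathcomp Require Import all_boot all_order all_algebra.
From mathcomp Require Import all_classical all_reals all_analysis.
From mathcomp Require Import ring lra.
Import Order.TTheory GRing.Theory Num.Theory.
Local Open Scope classical_set_scope.
Local Open Scope ring_scope.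

(* Fix (x', y') in D phi and put p0 = phi (x', y').  Lower semicontinuity gives
   del > 0 with phi (z, y') > p0 - 1 whenever d (z, x') < del.  For a far point z,
   with D = d (x', z) >= del, take the curve g from x' to z given by (A2) for the
   base point (x', y'): as the convexity inequality holds for every admissible
   tau' <= tau, letting 1/tau' grow forces d (g t, x') <= t D, so g t is
   del-close to x' at t = del / (2 D).  The inequality for tau at that t then gives
   phi (z, y') + D^2 / (2 tau) >= p0 - 2 D / del + (1/tau + lambda) D^2 / 4, a
   quadratic lower bound with positive leading coefficient that beats the linear
   loss coming from d (z, x) >= D - d (x', x).  The bound on phi^X is the same
   argument applied to -phi (x', .). *)

Section RealBounds.
Context {R : realType}.

Lemma le0_of_scaled_ubound (c e K : R) : (forall s, c <= s -> s * e <= K) -> e <= 0.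
Proof.
move=> bounded; rewrite leNgt; apply/negP => e_gt0.
pose s := Num.max c ((`|K| + 1) / e).
have /bounded : c <= s by rewrite le_max lexx.
have : (`|K| + 1) / e <= s by rewrite le_max lexx orbT.
rewrite ler_pdivrMr // => Ks.
have := ler_norm K; lra.
Qed.

Lemma chord_dist_le [h0 h1 q d D t m lam : R] : 0 <= d -> 0 <= t -> 0 <= D ->
  (forall s, m <= s -> q + s * d ^+ 2 / 2 <=
     (1 - t) * h0 + t * (h1 + s * D ^+ 2 / 2) - (s + lam) / 2 * t * (1 - t) * D ^+ 2) ->
  d <= t * D.
Proof.
move=> d0 t0 D0 convex.
suff : (d ^+ 2 - (t * D) ^+ 2) / 2 <= 0.
  by rewrite pmulr_lle0 ?invr_gt0 // subr_le0 ler_sqr // nnegrE mulr_ge0.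
apply: (@le0_of_scaled_ubound m _
  ((1 - t) * h0 + t * h1 - lam / 2 * t * (1 - t) * D ^+ 2 - q)) => s /convex.
have -> : (1 - t) * h0 + t * (h1 + s * D ^+ 2 / 2) - (s + lam) / 2 * t * (1 - t) * D ^+ 2
  = (1 - t) * h0 + t * h1 - lam / 2 * t * (1 - t) * D ^+ 2 + s * (t * D) ^+ 2 / 2 by ring.
have -> : s * ((d ^+ 2 - (t * D) ^+ 2) / 2) = s * d ^+ 2 / 2 - s * (t * D) ^+ 2 / 2 by ring.
lra.
Qed.

Lemma chord_lower_bound [h0 h1 q D del m mu : R] : 0 < del <= D -> 0 < mu ->
  h0 - 1 < q ->
  q <= (1 - del / (2 * D)) * h0 + del / (2 * D) * (h1 + m * D ^+ 2 / 2)
         - mu / 2 * (del / (2 * D)) * (1 - del / (2 * D)) * D ^+ 2 ->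
  h0 - 2 * D / del + mu * D ^+ 2 / 4 <= h1 + m * D ^+ 2 / 2.
Proof.
move=> /andP[del0 delD] mu0 q_gt q_le.
have D0 : 0 < D by apply: lt_le_trans delD.
set t := del / (2 * D) in q_le.
have t_half : t <= 1 / 2 by rewrite ler_pdivrMr ?mulr_gt0 //; lra.
set W := h1 - h0 + m * D ^+ 2 / 2 - mu * (1 - t) * D ^+ 2 / 2.
have tW : -1 < t * W by rewrite /W; lra.
have W_gt : - (2 * D / del) < W.
  have -> : W = (t * W) * (2 * D / del) by rewrite /t; field; lra.
  have : -1 * (2 * D / del) < (t * W) * (2 * D / del).
    by rewrite ltr_pM2r // divr_gt0 // mulr_gt0.
  lra.
suff : mu * D ^+ 2 / 4 <= mu * (1 - t) * D ^+ 2 / 2 by rewrite /W in W_gt; lra.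
have : 0 <= mu * D ^+ 2 by rewrite mulr_ge0 ?sqr_ge0 ?ltW.
nra.
Qed.

Lemma quadratic_lower_bound [h0 h1 D del c e m mu : R] :
  0 < mu -> 0 <= m -> 0 <= c -> 0 <= D -> 0 <= e -> D - c <= e ->
  h0 - 2 * D / del + mu * D ^+ 2 / 4 <= h1 + m * D ^+ 2 / 2 ->
  h0 - (2 / del + m * c) ^+ 2 / mu <= h1 + m * e ^+ 2 / 2.
Proof.
move=> mu0 m0 c0 D0 e0 De growth.
set b := 2 / del + m * c.
have e_sqr : D ^+ 2 - 2 * c * D <= e ^+ 2.
  have [cD|Dc] := lerP c D; last by have := sqr_ge0 e; nra.
  have : (D - c) ^+ 2 <= e ^+ 2 by rewrite ler_sqr ?nnegrE ?subr_ge0.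
  by have := sqr_ge0 c; nra.
have square : 0 <= mu * D ^+ 2 / 4 - b * D + b ^+ 2 / mu.
  have -> : mu * D ^+ 2 / 4 - b * D + b ^+ 2 / mu = (mu * D / 2 - b) ^+ 2 / mu.
    by field; lra.
  by rewrite divr_ge0 ?sqr_ge0 ?ltW.
have : m * (D ^+ 2 - 2 * c * D) <= m * e ^+ 2 by rewrite ler_wpM2l.
rewrite /b in square *.
nra.
Qed.

End RealBounds.

Section MoreauEnvelope.
Variables (R : realType) (T : Type) (d : T -> T -> R) (F : T -> \bar R).
Variables (x0 : T) (h0 lam tau : R).
Hypothesis d_metric : is_metric d.
Hypothesis tau_gt0 : 0 < tau.
Hypothesis mu_gt0 : 0 < tau^-1 + lam.
Hypothesis F_x0 : F x0 = h0%:E.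
Hypothesis F_gtNy : forall z, (-oo < F z)%E.
Hypothesis F_lsc : lsc d F.
(* (A2) at the base point x0, with the scale s standing for 1 / tau'. *)
Hypothesis F_convex : forall {z h1}, F z = h1%:E -> exists g : R -> T,
  forall s, tau^-1 <= s -> forall t, 0 <= t <= 1 ->
  (F (g t) + (s * d (g t) x0 ^+ 2 / 2)%:E <=
   ((1 - t) * h0 + t * (h1 + s * d x0 z ^+ 2 / 2)
    - (s + lam) / 2 * t * (1 - t) * d x0 z ^+ 2)%:E)%E.

Lemma far_point_growth [del : R] [z : T] [h1 : R] : 0 < del ->
  (forall w, d w x0 < del -> ((h0 - 1)%:E < F w)%E) ->
  F z = h1%:E -> del <= d x0 z ->
  h0 - 2 * d x0 z / del + (tau^-1 + lam) * d x0 z ^+ 2 / 4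
    <= h1 + tau^-1 * d x0 z ^+ 2 / 2.
Proof.
have [d_ge0 _ _ _] := d_metric.
move=> del0 near_x0 Fz delD; set D := d x0 z in delD *.
have D0 : 0 < D by apply: lt_le_trans delD.
set t := del / (2 * D).
have t01 : 0 <= t <= 1.
  apply/andP; split; first by rewrite /t divr_ge0 // ltW // mulr_gt0.
  by rewrite /t ler_pdivrMr ?mulr_gt0 //; lra.
have [g convex] := F_convex Fz.
have [q Fq] : exists q, F (g t) = q%:E.
  have := convex _ (lexx _) _ t01; have := F_gtNy (g t).
  by case: (F (g t)) => [q _ _| _ |//]; [exists q | rewrite addye].
have {}convex s : tau^-1 <= s -> q + s * d (g t) x0 ^+ 2 / 2 <=
    (1 - t) * h0 + t * (h1 + s * D ^+ 2 / 2) - (s + lam) / 2 * t * (1 - t) * D ^+ 2.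
  by move=> /convex /(_ _ t01); rewrite Fq -EFinD lee_fin.
have q_gt : h0 - 1 < q.
  have t0 : 0 <= t by case/andP: t01.
  have dist := chord_dist_le (d_ge0 _ _) t0 (ltW D0) convex.
  rewrite -lte_fin -Fq; apply: near_x0.
  apply: le_lt_trans dist _.
  have -> : t * D = del / 2 by rewrite /t; field; lra.
  by rewrite ltr_pdivrMr //; lra.
apply: chord_lower_bound q_gt _ => //; first by rewrite del0 delD.
rewrite -/t; have := convex _ (lexx _).
have : 0 <= tau^-1 * d (g t) x0 ^+ 2 / 2.
  by rewrite divr_ge0 // mulr_ge0 ?sqr_ge0 // invr_ge0 ltW.
lra.
Qed.

Lemma moreau_envelope_lbound (x : T) :
  exists B : R, forall z, (B%:E <= F z + (d z x ^+ 2 / (2 * tau))%:E)%E.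
Proof.
have [d_ge0 _ d_sym d_tri] := d_metric.
have /F_lsc [del [del0 near_x0]] : ((h0 - 1)%:E < F x0)%E.
  by rewrite F_x0 lte_fin; lra.
have m0 : 0 <= tau^-1 by rewrite invr_ge0 ltW.
exists (h0 - 1 - (2 / del + tau^-1 * d x0 x) ^+ 2 / (tau^-1 + lam)) => z.
have := F_gtNy z; case Fz: (F z) => [h1| |] // _; last by rewrite addye ?leey.
rewrite -EFinD lee_fin.
have -> : d z x ^+ 2 / (2 * tau) = tau^-1 * d z x ^+ 2 / 2.
  by field; rewrite gt_eqF.
have bound_ge0 : 0 <= (2 / del + tau^-1 * d x0 x) ^+ 2 / (tau^-1 + lam).
  by rewrite divr_ge0 ?sqr_ge0 ?ltW.
have e_ge0 : 0 <= tau^-1 * d z x ^+ 2 / 2 by rewrite divr_ge0 // mulr_ge0 ?sqr_ge0.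
have [Dlt|Dge] := ltP (d x0 z) del.
  have : h0 - 1 < h1 by rewrite -lte_fin -Fz near_x0 // d_sym.
  lra.
have De : d x0 z - d x0 x <= d z x by rewrite (d_sym z x); have := d_tri x0 x z; lra.
have := quadratic_lower_bound mu_gt0 m0 (d_ge0 _ _) (d_ge0 _ _) (d_ge0 _ _) De
  (far_point_growth del0 near_x0 Fz Dge).
lra.
Qed.

End MoreauEnvelope.

Section Admissible.
Context {R : realType}.

Lemma tau_adm_gt0 [l tau : R] : tau_adm l tau -> 0 < tau^-1 + l.
Proof.
rewrite /tau_adm /inv_negpart /negpart => -[tau0]; rewrite -invr_gt0 in tau0.
case: eqP => [/eqP|/eqP neg_neq0]; first by rewrite eq_le ge_max => /andP[/andP[+ _] _]; lra.
have neg_gt0 : 0 < Num.max (- l) 0 by rewrite lt_neqAle eq_sym neg_neq0 le_max lexx orbT.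
rewrite lte_fin mul1r -[tau]invrK ltf_pV2 ?posrE // => neg_lt.
have : - l <= Num.max (- l) 0 by rewrite le_max lexx.
lra.
Qed.

Lemma tau_adm_inv [l tau s : R] : tau_adm l tau -> tau^-1 <= s -> tau_adm l s^-1.
Proof.
move=> [tau0 tau_lt] le_s.
have s0 : 0 < s by apply: lt_le_trans le_s; rewrite invr_gt0.
split; first by rewrite invr_gt0.
apply: le_lt_trans tau_lt; rewrite lee_fin.
by rewrite -[tau]invrK lef_pV2 ?posrE ?invr_gt0.
Qed.

End Admissible.

Lemma lsc_oppe {R : realType} [T : Type] [d : T -> T -> R] [f : T -> \bar R] :
  usc d f -> lsc d (fun z => - f z)%E.
Proof.
move=> f_usc x a; rewrite lteNr -EFinN => /f_usc[del [del0 near_x]].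
by exists del; split=> // z /near_x; rewrite lteNr EFinN.
Qed.

Section SaddleEnvelopes.
Variables (R : realType) (X Y : Type) (dX : X -> X -> R) (dY : Y -> Y -> R).
Variables (phi : X * Y -> \bar R) (l tau : R) (x' : X) (y' : Y).
Hypotheses (dX_metric : is_metric dX) (dY_metric : is_metric dY).
Hypotheses (phi_closed : closed_fun dX dY phi) (phi_A1 : A1 phi).
Hypotheses (phi_A2 : A2 dX dY phi l) (tau_ok : tau_adm l tau).
Hypotheses (Dx' : DX phi x') (Dy' : DY phi y').

Let divr_2inv (s a : R) : 0 < s -> a / (2 * s^-1) = s * a / 2.
Proof. by move=> s0; field; rewrite gt_eqF. Qed.

Let phi_center_fin : exists p0, phi (x', y') = p0%:E.
Proof. by have := Dx' y'; have := Dy' x'; case: (phi (x', y')) => // p0; exists p0. Qed.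

Lemma phiY_gtNy (x : X) : (-oo < phiY dX phi tau x y')%E.
Proof.
have [_ dX0 dX_sym _] := dX_metric; have [_ dY0 _ _] := dY_metric.
have [tau0 _] := tau_ok; have [p0 phi0] := phi_center_fin.
suff [B lbound] : exists B : R,
    forall z, (B%:E <= phi (z, y') + (dX z x ^+ 2 / (2 * tau))%:E)%E.
  apply: lt_le_trans (ltNyr B) _; apply: le_ereal_inf_tmp => _ [z _ <-].
  exact: lbound.
apply: (@moreau_envelope_lbound _ _ _ (fun z => phi (z, y')) _ _ _ _ dX_metric tau0
  (tau_adm_gt0 tau_ok) phi0 Dy' (phi_closed.2 y' Dy')).
move=> z h1 phi_z.
have Dz : DX phi z.
  by apply: contrapT => /phi_A1.1 /(_ Dy'); rewrite phi_z.
have [g [? [_ [g0 [g1 [_ [_ [_ convex]]]]]]]] := phi_A2 x' y' x' y' z y' Dx' Dy' Dz Dy'.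
exists g => s le_s t t01.
have s0 : 0 < s by apply: lt_le_trans le_s; rewrite invr_gt0.
have [+ _] := convex _ (tau_adm_inv tau_ok le_s) t t01.
move=> /(_ y'); rewrite /Phi /= g0 g1 phi0 phi_z.
rewrite (dX0 x' x').2 // (dY0 y' y').2 // (dX_sym z x') invrK expr0n /= !subr0 !divr_2inv //.
rewrite -!EFinD => /le_trans; apply; rewrite lee_fin.
lra.
Qed.

Lemma phiX_lty (y : Y) : (phiX dY phi tau y x' < +oo)%E.
Proof.
have [_ dX0 _ _] := dX_metric; have [_ dY0 dY_sym _] := dY_metric.
have [tau0 _] := tau_ok; have [p0 phi0] := phi_center_fin.
suff [B lbound] : exists B : R,
    forall w, (B%:E <= - phi (x', w) + (dY w y ^+ 2 / (2 * tau))%:E)%E.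
  apply: le_lt_trans (ltry (- B)); apply: ge_ereal_sup => _ [w _ <-].
  by rewrite EFinN leeNr fin_num_oppeB.
apply: (@moreau_envelope_lbound _ _ _ (fun w => - phi (x', w))%E y' (- p0) _ _ dY_metric
  tau0 (tau_adm_gt0 tau_ok) _ _ (lsc_oppe (phi_closed.1 x' Dx'))).
- by rewrite /= phi0.
- by move=> w; rewrite lteNr; exact: Dx'.
move=> w h1 phi_w; have {}phi_w : phi (x', w) = (- h1)%:E by rewrite -[LHS]oppeK phi_w.
have Dw : DY phi w.
  by apply: contrapT => /(phi_A1.2 x' w Dx'); rewrite phi_w.
have [? [sig [_ [_ [_ [_ [sig0 [sig1 convex]]]]]]]] := phi_A2 x' y' x' y' x' w Dx' Dy' Dx' Dw.
exists sig => s le_s t t01.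
have s0 : 0 < s by apply: lt_le_trans le_s; rewrite invr_gt0.
have [_ +] := convex _ (tau_adm_inv tau_ok le_s) t t01.
move=> /(_ x'); rewrite /Phi /= sig0 sig1 phi0 phi_w.
rewrite (dX0 x' x').2 // (dY0 y' y').2 // (dY_sym w y') invrK expr0n /= !subr0 !divr_2inv //.
rewrite -!EFinD -leeN2 fin_num_oppeD // -!EFinN => convex_t.
apply: le_trans (le_trans _ convex_t) _; last by rewrite lee_fin; lra.
by apply: leeD => //; rewrite lee_fin; lra.
Qed.

End SaddleEnvelopes.

Theorem mainTheorem8 (R : realType) (X Y : Type)
    (dX : X -> X -> R) (dY : Y -> Y -> R) (phi : X * Y -> \bar R) (l : R) :
  is_metric dX -> complete_metric dX ->
  is_metric dY -> complete_metric dY ->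
  proper_fun phi -> closed_fun dX dY phi -> A1 phi -> A2 dX dY phi l ->
  forall tau : R, tau_adm l tau ->
  forall (x' : X) (y' : Y), DX phi x' -> DY phi y' ->
    (forall x : X, (-oo < phiY dX phi tau x y')%E) /\
    (forall y : Y, (phiX dY phi tau y x' < +oo)%E).
Proof.
move=> dX_metric _ dY_metric _ _ phi_closed phi_A1 phi_A2 tau tau_ok x' y' Dx' Dy'.
split=> [x|y].
- exact: phiY_gtNy dX_metric dY_metric phi_closed phi_A1 phi_A2 tau_ok Dx' Dy' x.
- exact: phiX_lty dX_metric dY_metric phi_closed phi_A1 phi_A2 tau_ok Dx' Dy' y.
Qed.
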